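(* Let $\beta\in(1/2,1)$, $\eta\in(0,1)$ and $a>0$, and assume the coupling below. There exist $c=c(\beta)>0$ and $n_0=n_0(\beta,\eta,a)$ such that for all $n\ge n_0$ and all $u\in[n^{\eta-1},1/2]$, \[ \Pr\Big(\sqrt n\big(\tilde F^{(0)}(u)-\mathbb E\tilde F^{(0)}(u)\big)>a\sqrt{u(1-u)}\Big)\le e^{-a c\, n^{\eta/2}}+e^{-n^{1-(\beta+1/2)/2}} . \]
   Context: $\epsilon_n=n^{-\beta}$. Coupling: $I\subset\{1,\dots,n\}$ random with each $i$ included independently with probability $\epsilon_n$; $Q^{(0)}_1,\dots,Q^{(0)}_n$ i.i.d. $\mathrm{Unif}(0,1)$ independent of $I$. Define $\tilde F^{(0)}(t)=\frac1n\sum_{i\in I}\mathbf 1(Q^{(0)}_i\le t)$ (normalized by $n$, though only $|I|$ terms appear), and $\mathbb E$ denotes unconditional expectation. *)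

From HB Require Import structures.
From mathcomp Require Import all_boot all_order all_algebra.
From mathcomp Require Import all_classical all_reals all_analysis.
Set Implicit Arguments. Unset Strict Implicit. Unset Printing Implicit Defensive.
Import Order.TTheory GRing.Theory Num.Theory.
Local Open Scope classical_set_scope.
Local Open Scope ring_scope.

(* The coupling on an abstract probability space P:
   J i = (i \in I), i.i.d. Bernoulli(eps); Q i i.i.d. Unif(0,1);
   all 2n variables mutually independent. *)
Definition coupling_indep d (T : measurableType d) (R : realType)
  (P : probability T R) (n : nat) (J : 'I_n -> T -> bool) (Q : 'I_n -> T -> R) :=
  forall (A : 'I_n -> set bool) (B : 'I_n -> set R),
    (forall i, measurable (A i)) -> (forall i, measurable (B i)) ->
    P (\bigcap_(i in [set: 'I_n]) (J i @^-1` A i `&` Q i @^-1` B i)) =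
    ((\prod_(i < n) (fine (P (J i @^-1` A i)) * fine (P (Q i @^-1` B i))))%:E).

Definition is_coupling d (T : measurableType d) (R : realType)
  (P : probability T R) (n : nat) (eps : R)
  (J : 'I_n -> T -> bool) (Q : 'I_n -> T -> R) : Prop :=
  [/\ (forall i, measurable_fun setT (J i)),
      (forall i, measurable_fun setT (Q i)),
      (forall i (A : set bool), measurable A -> P (J i @^-1` A) = bernoulli_prob eps A),
      (forall i (B : set R), measurable B -> P (Q i @^-1` B) = uniform_prob (@ltr01 R) B)
    & coupling_indep P J Q].

Definition Ftilde (T : Type) (R : realType) (n : nat)
  (J : 'I_n -> T -> bool) (Q : 'I_n -> T -> R) (w : T) (t : R) : R :=
  (#|[set i : 'I_n | J i w && (Q i w <= t)]|)%:R / n%:R.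

From HB Require Import structures.
From mathcomp Require Import all_boot all_order all_algebra.
From mathcomp Require Import all_classical all_reals all_analysis.
From mathcomp Require Import ring lra.
Import Order.TTheory GRing.Theory Num.Theory.
Local Open Scope classical_set_scope.
Local Open Scope ring_scope.

(* Write hits(w) = {i | i \in I, Q_i <= u}, so that F~(u) = |hits| / n.  The
   deviation event {sqrt n (F~(u) - E F~(u)) > a sqrt(u(1-u))} is the event
   that |hits| exceeds n E F~(u) + r, where r = a sqrt(u(1-u)) sqrt n.  By
   independence, every fixed set S of k indices is contained in hits with
   probability (eps u)^k, so a union bound over the k-subsets gives
     P(|hits| >= k) <= C(n,k) (eps u)^k <= exp(e n eps u - k).
   For n beyond a threshold depending on (beta, a), the mean term e n eps u
   (of order n^(1-beta) u) is at most r / 2, while r >= (a/2) n^(eta/2)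
   because u >= n^(eta-1).  Hence the probability is at most
   exp(-(a/4) n^(eta/2)), which yields the claim with c = 1/4. *)

Set Implicit Arguments. Unset Strict Implicit. Unset Printing Implicit Defensive.

Lemma subset_of_card (T : finType) (A : {set T}) (k : nat) :
  (k <= #|A|)%N -> exists2 S : {set T}, S \subset A & #|S| = k.
Proof.
move=> kA; exists [set x in take k (enum A)].
  by apply/fintype.subsetP => x; rewrite inE => /mem_take; rewrite mem_enum.
rewrite cardsE (card_uniqP _) ?size_take ?take_uniq ?enum_uniq // -cardE.
by case: ltnP => // /(conj kA)/andP; rewrite -eqn_leq => /eqP.
Qed.

Lemma measure_bigsetU_le d (T : measurableType d) (R : realType)
    (mu : {measure set T -> \bar R}) (I : Type) (s : seq I) (p : pred I)
    (F : I -> set T) :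
  (forall i, measurable (F i)) ->
  (mu (\big[setU/set0]_(i <- s | p i) F i) <= \sum_(i <- s | p i) mu (F i))%E.
Proof.
move=> mF; elim: s => [|x s IH]; first by rewrite !big_nil measure0.
rewrite !big_cons; case: ifPn => // _.
apply: le_trans (measureU2 _ _ _) _ => //; first exact: bigsetU_measurable.
exact: leeD.
Qed.

Lemma ffact_leq_expn (n k : nat) : (n ^_ k <= n ^ k)%N.
Proof.
elim: k => [|k IH]; first by rewrite ffactn0 expn0.
by rewrite ffactnSr expnSr leq_mul // leq_subr.
Qed.

Lemma pow_div_fact_le_expR (R : realType) (x : R) (k : nat) :
  0 <= x -> x ^+ k / k`!%:R <= expR x.
Proof.
move=> x0; case: k => [|k]; last by apply: le_trans (expR_ge1Dxn k x0); rewrite lerDr.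
by rewrite expr0 fact0 divr1; apply: le_trans (expR_ge1Dx x); rewrite lerDl.
Qed.

Lemma binomial_le_pow_div_fact (R : realType) (n k : nat) :
  'C(n, k)%:R <= n%:R ^+ k / k`!%:R :> R.
Proof.
rewrite ler_pdivlMr ?ltr0n ?fact_gt0 // -natrM bin_ffact -natrX ler_nat.
exact: ffact_leq_expn.
Qed.

(* C(n,k) x^k <= exp(e n x - k): combine C(n,k) <= n^k/k! with
   (e n x)^k / k! <= exp(e n x). *)
Lemma binomial_pow_le_expR (R : realType) (n k : nat) (x : R) : 0 <= x ->
  'C(n, k)%:R * x ^+ k <= expR (expR 1 * (n%:R * x) - k%:R).
Proof.
move=> x0; have e0 : 0 < expR (1 : R) ^+ k by rewrite exprn_gt0 ?expR_gt0.
have nx0 : 0 <= expR 1 * (n%:R * x) by rewrite !mulr_ge0 ?expR_ge0.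
apply: le_trans (_ : n%:R ^+ k / k`!%:R * x ^+ k <= _).
  by rewrite ler_wpM2r ?exprn_ge0 ?binomial_le_pow_div_fact.
rewrite expRD expRN -[k%:R]mulr1 expRM_natl ler_pdivlMr //.
have -> : n%:R ^+ k / k`!%:R * x ^+ k * expR 1 ^+ k =
    (expR 1 * (n%:R * x)) ^+ k / k`!%:R by rewrite !exprMn; ring.
exact: pow_div_fact_le_expR.
Qed.

Lemma bernoulli_prob_true (R : realType) (p : R) : 0 <= p <= 1 ->
  bernoulli_prob p [set true] = p%:E.
Proof.
by move=> p01; rewrite bernoulli_probE //= !diracE mem_set //= memNset //= mule1 mule0 adde0.
Qed.

Lemma uniform_prob_Iic (R : realType) (u : R) : 0 <= u <= 1 ->
  uniform_prob (@ltr01 R) `]-oo, u] = u%:E.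
Proof.
move=> /andP[u0 u1]; rewrite /uniform_prob integral_uniform_pdf.
have -> : `]-oo, u] `&` `[0, 1] = [set` `[0, u]] :> set R.
  apply/seteqP; split => x /=; rewrite !in_itv /=; first by move=> [-> /andP[-> _]].
  by move=> /andP[x0 xu]; rewrite x0 (le_trans xu u1).
rewrite (eq_integral (cst 1%:E)); last first.
  move=> x; rewrite inE /= in_itv /= => /andP[x0 xu].
  by rewrite /uniform_pdf x0 (le_trans xu u1) /= (_ : 1 - 0 = 1 :> R) ?subr0 ?invr1.
rewrite integral_cst //= lebesgue_measure_itv /= lte_fin mul1e oppr0 adde0.
by case: ltgtP u0 => // <-.
Qed.

(* The family of sets equal to A on the indices of S and to the whole space
   elsewhere; this is how the event "all of S are hits" fits the product form
   of the independence hypothesis. *)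
Definition only_on (n : nat) (X : Type) (S : {set 'I_n}) (A : set X) (i : 'I_n) : set X :=
  if i \in S then A else setT.

Section CouplingTail.
Context d (T : measurableType d) (R : realType) (P : probability T R) (n : nat)
  (eps : R) (J : 'I_n -> T -> bool) (Q : 'I_n -> T -> R) (u : R).
Hypotheses (coupling : is_coupling P eps J Q) (eps01 : 0 <= eps <= 1) (u01 : 0 <= u <= 1).

Definition hits (w : T) : {set 'I_n} := [set i | J i w && (Q i w <= u)].

Lemma subset_hits_bigcap (S : {set 'I_n}) :
  [set w | S \subset hits w] =
  \bigcap_(i in [set: 'I_n])
     (J i @^-1` only_on S [set true] i `&` Q i @^-1` only_on S `]-oo, u] i).
Proof.
apply/seteqP; split => w /=.
  move=> /fintype.subsetP Sh i _; rewrite /only_on; case: ifPn => // iS.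
  by move: (Sh i iS); rewrite inE => /andP[Jw Qu]; split; rewrite /= ?in_itv /= ?Jw ?Qu.
move=> h; apply/fintype.subsetP => i iS.
by move: (h i I); rewrite /only_on iS /= in_itv /= /hits inE => -[-> ->].
Qed.

Lemma measurable_subset_hits (S : {set 'I_n}) : measurable [set w | S \subset hits w].
Proof.
case: coupling => mJ mQ _ _ _; rewrite subset_hits_bigcap.
apply: fin_bigcap_measurable; first exact: finite_finset.
move=> i _; rewrite /only_on; case: ifP => _;
  by apply: measurableI; rewrite -[X in measurable X]setTI; [apply: mJ | apply: mQ].
Qed.

Lemma prob_subset_hits (S : {set 'I_n}) :
  P [set w | S \subset hits w] = ((eps * u) ^+ #|S|)%:E.
Proof.
case: coupling => _ _ PJ PQ indep.
have mOn d' (X : measurableType d') (A : set X) i :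
    measurable A -> measurable (only_on S A i).
  by move=> mA; rewrite /only_on; case: ifP.
rewrite subset_hits_bigcap indep => [|i|i]; last 2 first.
- exact: mOn.
- by apply: mOn; exact: measurable_itv.
congr EFin; rewrite -prodr_const (bigID (mem S)) /= [X in _ * X]big1 ?mulr1.
  apply: eq_bigr => i iS; rewrite /only_on iS PJ // PQ; last exact: measurable_itv.
  by rewrite bernoulli_prob_true // uniform_prob_Iic.
move=> i iS; rewrite /only_on (negbTE iS) !preimage_setT probability_setT.
by rewrite mulr1.
Qed.

Lemma Ftilde_hits (w : T) : Ftilde J Q w u = #|hits w|%:R / n%:R.
Proof.
rewrite /Ftilde; congr (_%:R / _); apply: eq_card => i.
by rewrite inE; apply/idP/idP => [/set_mem|/mem_set].
Qed.

Lemma hits_tail_bigsetU (k : nat) :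
  [set w | (k <= #|hits w|)%N] =
  \big[setU/set0]_(S : {set 'I_n} | #|S| == k) [set w | S \subset hits w].
Proof.
rewrite -bigcup_seq_cond; apply/seteqP; split => w /=.
  by move=> /subset_of_card[S Sh Sk]; exists S; rewrite /= ?mem_index_enum ?Sk ?eqxx.
by move=> [S /andP[_ /eqP <-] /subset_leq_card].
Qed.

(* Union bound over the k-subsets. *)
Lemma hits_tail_binomial (k : nat) :
  (P [set w | (k <= #|hits w|)%N] <= ('C(n, k)%:R * (eps * u) ^+ k)%:E)%E.
Proof.
rewrite hits_tail_bigsetU.
apply: le_trans (measure_bigsetU_le _ _ _ measurable_subset_hits) _.
rewrite (eq_bigr (fun=> ((eps * u) ^+ k)%:E)); last by move=> S /eqP <-; exact: prob_subset_hits.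
by rewrite sumEFin lee_fin sumr_const -cardsE card_draws card_ord mulr_natl.
Qed.

Lemma hits_tail_expR (x : R) : 0 <= x ->
  (P [set w | (x < #|hits w|%:R)%R] <= (expR (expR 1 * (n%:R * (eps * u)) - x))%:E)%E.
Proof.
move=> x0; set k := (Num.trunc x).+1.
have -> : [set w | x < #|hits w|%:R] = [set w | (k <= #|hits w|)%N].
  by apply/seteqP; split => w /=; rewrite truncn_lt_nat.
apply: le_trans (hits_tail_binomial k) _; rewrite lee_fin.
have eu0 : 0 <= eps * u by case/andP: eps01; case/andP: u01 => *; exact: mulr_ge0.
apply: le_trans (binomial_pow_le_expR n k eu0) _.
by rewrite ler_expR lerB // ltW // truncnS_gt.
Qed.

End CouplingTail.
Lemma deviation_rescale (R : realType) (t N K m b : R) : 0 < t -> t ^+ 2 = N ->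
  (b < t * (K / N - m)) = (N * m + b * t < K).
Proof.
move=> t0 <-; have -> : t * (K / t ^+ 2 - m) = K / t - t * m by field; rewrite gt_eqF.
by rewrite ltrBrDr ltr_pdivlMr // mulrDl [t * m * t]mulrAC -expr2 addrC.
Qed.

Lemma drift_le_spread (R : realType) (e N eps a u : R) :
  0 <= e -> 0 <= eps -> 0 <= a -> 0 <= N -> 0 <= u <= 1 / 2 ->
  8 * e ^+ 2 * (N * eps ^+ 2) <= a ^+ 2 ->
  2 * (e * (N * (eps * u))) <= a * (Num.sqrt (u * (1 - u)) * Num.sqrt N).
Proof.
move=> e0 eps0 a0 N0 /andP[u0 u2] h.
rewrite -(ler_pXn2r (n := 2)) ?nnegrE ?mulr_ge0 ?sqrtr_ge0 //.
rewrite !exprMn !sqr_sqrtr ?mulr_ge0 //; last lra.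
have Nu2 : 0 <= N * u ^+ 2 by rewrite mulr_ge0 ?exprn_ge0.
have hN := ler_wpM2r Nu2 h.
have hu : 0 <= a ^+ 2 * (N * u) * (1 - 2 * u) by rewrite !mulr_ge0 ?exprn_ge0 //; lra.
nra.
Qed.

Lemma half_le_spread (R : realType) (p N u : R) :
  0 <= p -> 0 <= N -> 0 <= u <= 1 / 2 -> p ^+ 2 <= u * N ->
  p / 2 <= Num.sqrt (u * (1 - u)) * Num.sqrt N.
Proof.
move=> p0 N0 /andP[u0 u2] h.
rewrite -(ler_pXn2r (n := 2)) ?nnegrE ?mulr_ge0 ?sqrtr_ge0 ?divr_ge0 //.
rewrite !exprMn !sqr_sqrtr ?mulr_ge0 //; last lra.
have hu : 0 <= u * N * (1 / 2 - u) by rewrite !mulr_ge0 //; lra.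
nra.
Qed.

Lemma le_powR_of_root_lt (R : realType) (C N g : R) :
  0 < g -> 0 < C -> C `^ g^-1 < N -> C <= N `^ g.
Proof.
move=> g0 C0 CN; rewrite -[C in C <= _](powRr1 (ltW C0)) -(mulVf (lt0r_neq0 g0)) powRrM.
by apply: ge0_ler_powR; rewrite ?nnegrE ?powR_ge0 ?ltW // (le_lt_trans _ CN) ?powR_ge0.
Qed.

Lemma mul_sqr_powRN (R : realType) (N b : R) : 0 < N ->
  N * (N `^ (- b)) ^+ 2 = (N `^ (2 * b - 1))^-1.
Proof.
move=> N0; rewrite -powRN -powR_mulrn ?powR_ge0 // -powRrM.
rewrite -{1}(powRr1 (ltW N0)) -powRD ?(gt_eqF N0) ?implybT //.
by congr (_ `^ _); rewrite mulr2n; lra.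
Qed.

Lemma sqr_powR_half (R : realType) (N g : R) : 0 <= N ->
  (N `^ (g / 2)) ^+ 2 = N `^ g.
Proof.
by move=> N0; rewrite -powR_mulrn ?powR_ge0 // -powRrM mulr2n; congr (_ `^ _); field.
Qed.

Lemma drift_condition (R : realType) (N b a : R) :
  1 / 2 < b -> 0 < a -> (8 * expR 1 ^+ 2 / a ^+ 2) `^ (2 * b - 1)^-1 < N ->
  8 * expR 1 ^+ 2 * (N * (N `^ (- b)) ^+ 2) <= a ^+ 2.
Proof.
move=> b2 a0 hN; set C := 8 * expR 1 ^+ 2.
have C0 : 0 < C / a ^+ 2 by rewrite divr_gt0 ?exprn_gt0 ?mulr_gt0 ?expR_gt0.
have g0 : 0 < 2 * b - 1 by lra.
have N0 : 0 < N by apply: le_lt_trans hN; exact: powR_ge0.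
have := le_powR_of_root_lt g0 C0 hN.
rewrite mul_sqr_powRN // ler_pdivrMr ?exprn_gt0 // => hC.
by rewrite ler_pdivrMr ?powR_gt0 // mulrC.
Qed.

Lemma spread_condition (R : realType) (N g u : R) :
  0 < N -> N `^ (g - 1) <= u -> (N `^ (g / 2)) ^+ 2 <= u * N.
Proof.
move=> N0 hu; rewrite sqr_powR_half; last exact: ltW.
rewrite -[g](subrK 1) powRD ?(gt_eqF N0) ?implybT // powRr1 ?(ltW N0) //.
by rewrite ler_pM2r.
Qed.

Lemma exponent_bound (R : realType) (beta eta a u m : R) (n : nat) :
  1 / 2 < beta -> 0 < a -> 0 <= m ->
  (8 * expR 1 ^+ 2 / a ^+ 2) `^ (2 * beta - 1)^-1 < n%:R ->
  n%:R `^ (eta - 1) <= u <= 1 / 2 ->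
  expR 1 * (n%:R * (n%:R `^ (- beta) * u))
    - (n%:R * m + a * Num.sqrt (u * (1 - u)) * Num.sqrt n%:R)
  <= - (a * (1 / 4) * n%:R `^ (eta / 2)).
Proof.
move=> b2 a0 m0 Cn /andP[uL uU].
have N0 : 0 < n%:R :> R by apply: le_lt_trans Cn; exact: powR_ge0.
have u0 : 0 <= u by apply: le_trans uL; exact: powR_ge0.
have u2 : 0 <= u <= 1 / 2 by rewrite u0 uU.
have drift := drift_le_spread (expR_ge0 1) (powR_ge0 _ (- beta)) (ltW a0) (ltW N0) u2
  (drift_condition b2 a0 Cn).
have spread := ler_wpM2l (ltW a0)
  (half_le_spread (powR_ge0 _ (eta / 2)) (ltW N0) u2 (spread_condition N0 uL)).
have := mulr_ge0 (ltW N0) m0; lra.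
Qed.

Theorem lemma11 (R : realType) (beta : R) :
  1 / 2 < beta < 1 ->
  exists c : R, 0 < c /\
  forall eta a : R, 0 < eta < 1 -> 0 < a ->
  exists n0 : nat, forall n : nat, (n0 <= n)%N ->
  forall (d : measure_display) (T : measurableType d) (P : probability T R)
         (J : 'I_n -> T -> bool) (Q : 'I_n -> T -> R),
  is_coupling P (n%:R `^ (- beta)) J Q ->
  forall u : R, n%:R `^ (eta - 1) <= u <= 1 / 2 ->
  (P [set w | (a * Num.sqrt (u * (1 - u)) <
      Num.sqrt n%:R * (Ftilde J Q w u - fine ('E_P[fun x => Ftilde J Q x u])))%R]
   <= (expR (- (a * c * n%:R `^ (eta / 2))) +
       expR (- (n%:R `^ (1 - (beta + 1 / 2) / 2))))%R%:E)%E.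
Proof.
move=> /andP[b2 b1]; exists (1 / 4); split => // eta a /andP[eta0 eta1] a0.
set C := (8 * expR 1 ^+ 2 / a ^+ 2) `^ (2 * beta - 1)^-1.
exists (Num.trunc C).+1 => n Cn d T P J Q coupling u /andP[uL uU].
have {}Cn : C < n%:R by apply: lt_le_trans (truncnS_gt C) _; rewrite ler_nat.
have N0 : 0 < n%:R :> R by apply: le_lt_trans Cn; exact: powR_ge0.
have u0 : 0 <= u by apply: le_trans uL; exact: powR_ge0.
have u01 : 0 <= u <= 1 by rewrite u0 (le_trans uU) //; lra.
have eps01 : 0 <= (n%:R : R) `^ (- beta) <= 1.
  have n1 : (1 <= n%:R :> R) by rewrite ler1n -(ltr0n R).
  by rewrite powR_ge0 /= -[leRHS](powRr0 (n%:R : R)) ler_powR // oppr_le0; lra.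
set m := fine _; have m0 : 0 <= m.
  by apply/fine_ge0/expectation_ge0 => w; rewrite /Ftilde divr_ge0.
have t0 : 0 < Num.sqrt (n%:R : R) by rewrite sqrtr_gt0.
(* The deviation event is the event that the count of hits exceeds n m + r. *)
under eq_set => w do rewrite Ftilde_hits (deviation_rescale _ _ _ t0 (sqr_sqrtr (ltW N0))).
have x0 : 0 <= n%:R * m + a * Num.sqrt (u * (1 - u)) * Num.sqrt n%:R.
  by rewrite addr_ge0 ?mulr_ge0 ?sqrtr_ge0 // ?ltW.
apply: le_trans (hits_tail_expR coupling eps01 u01 x0) _.
rewrite lee_fin -[leLHS]addr0; apply: lerD; last exact: expR_ge0.
by rewrite ler_expR exponent_bound // uL uU.
Qed.
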